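(* Suppose (i) the initial sketch $P$ provided by the user satisfies $P\xRightarrow{*}\bar{P}^*$, and (ii) the user responses are $\mathcal{O}(Q)=\mathbb{I}[Q\xRightarrow{*}\bar{P}^*]$. Then, if the interactive synthesis algorithm terminates, it returns $\bar{P}^*$.
   Context: Setting: a DSL of database queries given by a context-free grammar with select, project and inner-join operations; holes are either tables in a sequence of inner-joins (nonterminal $I$) or columns (nonterminal $C$). A sketch is a sequence derivable from the start symbol; $\alpha\xRightarrow{*}\alpha'$ means $\alpha'$ is derivable from $\alpha$ (i.e., $\alpha'$ is a refinement of $\alpha$); a completion is a refinement with no holes. $\bar{P}^*$ denotes the true (user-intended) complete program. The interactive synthesis algorithm keeps a current sketch $P$ (initialized to the user's sketch) and a set $\mathcal{N}$ of rejected questions; while $P$ has holes, it forms candidate questions (refinements of $P$ obtained by filling one hole, and all holes sharing its name, with either a column $c_i$, a table $t_i$, or $t_i\Join_{C,C}I$), removes those in $\mathcal{N}$, picks one question $\hat Q$ (via sampled completions), asks the user oracle $\mathcal{O}(\hat Q)\in\{\mathsf{true},\mathsf{false}\}$, and sets $P\gets\hat Q$ if true, else adds $\hat Q$ to $\mathcal{N}$. It returns $P$ once $P$ is complete. $\mathbb{I}$ is the indicator function. *)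

From Stdlib Require Import Relation_Operators List.
From mathcomp Require Import all_boot.
Set Implicit Arguments.
Unset Strict Implicit.
Unset Printing Implicit Defensive.

(* Symbols of a sketch: terminals, or named holes (nonterminal + name). *)
Inductive sym (Tm NT : Type) : Type :=
| Term of Tm
| Hole of NT & nat.
Arguments Term {Tm NT}.
Arguments Hole {Tm NT}.

Inductive gsym (Tm NT : Type) : Type :=
| GT of Tm
| GN of NT.
Arguments GT {Tm NT}.
Arguments GN {Tm NT}.

Definition sketch (Tm NT : Type) := seq (sym Tm NT).

Section Model.
Variables (Tm : Type) (NT : eqType).
Variable production : NT -> seq (gsym Tm NT) -> Prop.

Inductive instance : seq (gsym Tm NT) -> sketch Tm NT -> Prop :=
| inst_nil : instance [::] [::]
| inst_T t r s : instance r s -> instance (GT t :: r) (Term t :: s)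
| inst_N n h r s : instance r s -> instance (GN n :: r) (Hole n h :: s).

Definition derive_step (a b : sketch Tm NT) : Prop :=
  exists (l r : sketch Tm NT) (N : NT) (h : nat) rhs (s : sketch Tm NT),
    [/\ production N rhs, instance rhs s,
        a = l ++ Hole N h :: r & b = l ++ s ++ r].

Definition derives : sketch Tm NT -> sketch Tm NT -> Prop :=
  @clos_refl_trans (sketch Tm NT) derive_step.

Definition has_hole (P : sketch Tm NT) : Prop :=
  exists N h, Stdlib.Lists.List.In (Hole N h) P.

Definition complete (P : sketch Tm NT) : Prop := ~ has_hole P.

Definition is_hole (N : NT) (h : nat) (x : sym Tm NT) : bool :=
  match x with Hole N' h' => (N' == N) && (h' == h) | Term _ => false end.

Definition fill (N : NT) (h : nat) (s : sketch Tm NT) (P : sketch Tm NT) :=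
  flatten (map (fun x => if is_hole N h x then s else [:: x]) P).

(* candidate questions: fill one hole (and all holes sharing its name)
   using one production of its nonterminal *)
Definition candidate (P Q : sketch Tm NT) : Prop :=
  exists N h rhs s,
    [/\ Stdlib.Lists.List.In (Hole N h) P, production N rhs, instance rhs s &
        Q = fill N h s P].

(* one iteration of the while loop on the state (P, rejected set);
   the choice of the question among candidates not yet rejected is left
   arbitrary (it models the sampling-based selection). *)
Inductive alg_step (O : sketch Tm NT -> bool) :
  sketch Tm NT * seq (sketch Tm NT) -> sketch Tm NT * seq (sketch Tm NT) -> Prop :=
| step_accept P Nr Q :
    has_hole P -> candidate P Q -> ~ Stdlib.Lists.List.In Q Nr -> O Q = true ->
    alg_step O (P, Nr) (Q, Nr)
| step_reject P Nr Q :
    has_hole P -> candidate P Q -> ~ Stdlib.Lists.List.In Q Nr -> O Q = false ->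
    alg_step O (P, Nr) (P, Q :: Nr).

Definition alg_returns (O : sketch Tm NT -> bool) (P Pf : sketch Tm NT) : Prop :=
  exists Nf, clos_refl_trans _ (alg_step O) (P, [::]) (Pf, Nf) /\ complete Pf.

End Model.

From Stdlib Require Import Relation_Operators Operators_Properties List.
From mathcomp Require Import all_boot.

Set Implicit Arguments.
Unset Strict Implicit.
Unset Printing Implicit Defensive.

(* The current sketch of the algorithm always refines to the intended program:
   initially by assumption, and afterwards because a question is adopted only
   when the oracle accepts it, i.e. only when it refines to the intended
   program. A complete sketch has no hole left to rewrite, so the only sketch
   it refines to is itself; hence the returned complete sketch is the intended
   program. *)

Section Refinement.

Variables (Tm : Type) (NT : eqType).
Variable production : NT -> seq (gsym Tm NT) -> Prop.

Lemma derives_complete_eq (a b : sketch Tm NT) :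
  complete a -> derives production a b -> a = b.
Proof.
move=> a_complete /(clos_rt_rt1n _ _ _ _)[//|a' c step _]; case: a_complete.
have [l [r [N [h [rhs [s [_ _ -> _]]]]]]] := step.
by exists N, h; apply/in_or_app; right; left.
Qed.

Variables (Pstar : sketch Tm NT) (O : sketch Tm NT -> bool).
Hypothesis O_sound : forall Q, O Q = true -> derives production Q Pstar.

Lemma alg_step_derives st st' :
  alg_step production O st st' ->
  derives production st.1 Pstar -> derives production st'.1 Pstar.
Proof. by case=> //= P Nr Q _ _ _ /O_sound. Qed.

Lemma alg_steps_derive st st' :
  clos_refl_trans _ (alg_step production O) st st' ->
  derives production st.1 Pstar -> derives production st'.1 Pstar.
Proof.
by elim=> [x y /alg_step_derives | // | x y z _ IHxy _ IHyz /IHxy /IHyz].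
Qed.

End Refinement.

Theorem theorem1 (Tm : Type) (NT : eqType)
  (production : NT -> seq (gsym Tm NT) -> Prop) (S : NT) (h0 : nat)
  (P Pstar : sketch Tm NT) (O : sketch Tm NT -> bool) :
  derives production [:: Hole S h0] P ->
  complete Pstar ->
  derives production P Pstar ->
  (forall Q, O Q = true <-> derives production Q Pstar) ->
  forall Pf, alg_returns production O P Pf -> Pf = Pstar.
Proof.
move=> _ _ P_Pstar O_spec Pf [Nf [run Pf_complete]].
have O_sound Q : O Q = true -> derives production Q Pstar by move/O_spec.
have Pf_Pstar := alg_steps_derive O_sound run P_Pstar.
exact: derives_complete_eq Pf_complete Pf_Pstar.
Qed.
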